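(* Let $(x_n,y_n)_{n\ge0}$ be the sequence of lattice points visited by the Hilbert curve, as defined in the context. Let $\mathtt{HS}$ be the deterministic finite automaton over the alphabet $\{0,1,2,3\}\times\{0,1\}\times\{0,1\}$ with states $\{0,\dots,9\}$ plus a non-accepting dead state, initial state $0$, accepting states $\{0,2,3,5,6,7\}$, and the following transitions (written $q\xrightarrow{[i,j,k]}q'$; all unlisted transitions go to the dead state, which loops to itself): from 0: $[0,0,0]\to0$, $[1,0,1]\to3$, $[1,1,0]\to1$, $[2,1,1]\to5$, $[3,0,1]\to4$, $[3,1,0]\to2$; from 1: $[0,0,0]\to3$, $[1,1,0]\to6$, $[2,1,1]\to6$, $[3,0,1]\to7$; from 2: $[0,1,1]\to4$, $[1,0,1]\to8$, $[2,0,0]\to8$, $[3,1,0]\to9$; from 3: $[0,0,0]\to1$, $[1,0,1]\to9$, $[2,1,1]\to9$, $[3,1,0]\to8$; from 4: $[0,1,1]\to2$, $[1,1,0]\to7$, $[2,0,0]\to7$, $[3,0,1]\to6$; from 5: $[0,0,0]\to5$, $[1,0,1]\to9$, $[1,1,0]\to6$, $[2,1,1]\to0$, $[3,0,1]\to7$, $[3,1,0]\to8$; from 6: $[0,0,0]\to9$, $[1,1,0]\to1$, $[2,1,1]\to1$, $[3,0,1]\to4$; from 7: $[0,1,1]\to8$, $[1,1,0]\to4$, $[2,0,0]\to4$, $[3,0,1]\to1$; from 8: $[0,1,1]\to7$, $[1,0,1]\to2$, $[2,0,0]\to2$, $[3,1,0]\to3$; from 9: $[0,0,0]\to6$, $[1,0,1]\to3$,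 $[2,1,1]\to3$, $[3,1,0]\to2$. For natural numbers $n,x,y$ and $t$ with $n<4^t$, $x<2^t$, $y<2^t$, let $a_1\cdots a_t$ be the base-$4$ representation of $n$, and $b_1\cdots b_t$, $c_1\cdots c_t$ the base-$2$ representations of $x,y$, each padded with leading zeros to length $t$. Then $\mathtt{HS}$ accepts $[a_1,b_1,c_1]\cdots[a_t,b_t,c_t]$ if and only if $(x,y)=(x_n,y_n)$. That is, the triple $(n,x_n,y_n)$ is $(4,2,2)$-synchronized, and $\mathtt{HS}$ recognizes it.
   Context: Directions are letters of $\{\mathtt{U},\mathtt{D},\mathtt{R},\mathtt{L}\}$. Let $t_D$ be the morphism $\mathtt{U}\mapsto\mathtt{R},\mathtt{D}\mapsto\mathtt{L},\mathtt{R}\mapsto\mathtt{U},\mathtt{L}\mapsto\mathtt{D}$ and $t_H$ the morphism $\mathtt{U}\mapsto\mathtt{D},\mathtt{D}\mapsto\mathtt{U},\mathtt{R}\mapsto\mathtt{L},\mathtt{L}\mapsto\mathtt{R}$. Define $A_0=\epsilon$ and for $n\ge0$: $A_{2n+1}=A_{2n}\,\mathtt{U}\,t_D(A_{2n})\,\mathtt{R}\,t_D(A_{2n})\,\mathtt{D}\,t_H(A_{2n})$, $A_{2n+2}=A_{2n+1}\,\mathtt{R}\,t_D(A_{2n+1})\,\mathtt{U}\,t_D(A_{2n+1})\,\mathtt{L}\,t_H(A_{2n+1})$. Each $A_n$ is a prefix of $A_{n+1}$; let $\mathbf{HC}=h_0h_1\cdots$ be the infinite word with all $A_n$ as prefixes.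 Define $(x_0,y_0)=(0,0)$ and $(x_{n+1},y_{n+1})=(x_n,y_n)+d(h_n)$ where $d(\mathtt{R})=(1,0)$, $d(\mathtt{L})=(-1,0)$, $d(\mathtt{U})=(0,1)$, $d(\mathtt{D})=(0,-1)$. *)

From Stdlib Require Import Arith ZArith List Lia.
Import ListNotations.

Inductive dir := U | D | R | L.

Definition tD (a : dir) : dir :=
  match a with U => R | D => L | R => U | L => D end.
Definition tH (a : dir) : dir :=
  match a with U => D | D => U | R => L | L => R end.

Definition step_odd (w : list dir) : list dir :=
  w ++ [U] ++ map tD w ++ [R] ++ map tD w ++ [D] ++ map tH w.
Definition step_even (w : list dir) : list dir :=
  w ++ [R] ++ map tD w ++ [U] ++ map tD w ++ [L] ++ map tH w.

Fixpoint A (k : nat) : list dir :=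
  match k with
  | 0 => []
  | S k' => if Nat.even k' then step_odd (A k') else step_even (A k')
  end.

(* h_n: the n-th letter of HC; A_{n+1} has length 4^{n+1}-1 > n and is a
   prefix of HC. *)
Definition h (n : nat) : dir := nth n (A (S n)) U.

Definition d (a : dir) : Z * Z :=
  match a with
  | R => (1, 0)%Z | L => (-1, 0)%Z | U => (0, 1)%Z | D => (0, -1)%Z
  end.

Fixpoint pos (n : nat) : Z * Z :=
  match n with
  | 0 => (0%Z, 0%Z)
  | S m => let '(x, y) := pos m in let '(dx, dy) := d (h m) in
           ((x + dx)%Z, (y + dy)%Z)
  end.

Definition dead : nat := 10.

Definition delta (q : nat) (l : nat * nat * nat) : nat :=
  match q, l with
  | 0, (0,0,0) => 0 | 0, (1,0,1) => 3 | 0, (1,1,0) => 1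
  | 0, (2,1,1) => 5 | 0, (3,0,1) => 4 | 0, (3,1,0) => 2
  | 1, (0,0,0) => 3 | 1, (1,1,0) => 6 | 1, (2,1,1) => 6 | 1, (3,0,1) => 7
  | 2, (0,1,1) => 4 | 2, (1,0,1) => 8 | 2, (2,0,0) => 8 | 2, (3,1,0) => 9
  | 3, (0,0,0) => 1 | 3, (1,0,1) => 9 | 3, (2,1,1) => 9 | 3, (3,1,0) => 8
  | 4, (0,1,1) => 2 | 4, (1,1,0) => 7 | 4, (2,0,0) => 7 | 4, (3,0,1) => 6
  | 5, (0,0,0) => 5 | 5, (1,0,1) => 9 | 5, (1,1,0) => 6
  | 5, (2,1,1) => 0 | 5, (3,0,1) => 7 | 5, (3,1,0) => 8
  | 6, (0,0,0) => 9 | 6, (1,1,0) => 1 | 6, (2,1,1) => 1 | 6, (3,0,1) => 4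
  | 7, (0,1,1) => 8 | 7, (1,1,0) => 4 | 7, (2,0,0) => 4 | 7, (3,0,1) => 1
  | 8, (0,1,1) => 7 | 8, (1,0,1) => 2 | 8, (2,0,0) => 2 | 8, (3,1,0) => 3
  | 9, (0,0,0) => 6 | 9, (1,0,1) => 3 | 9, (2,1,1) => 3 | 9, (3,1,0) => 2
  | _, _ => dead
  end.

Definition accepting (q : nat) : bool :=
  match q with 0 | 2 | 3 | 5 | 6 | 7 => true | _ => false end.

Definition run (w : list (nat * nat * nat)) : nat := fold_left delta w 0.

Definition HS_accepts (w : list (nat * nat * nat)) : bool := accepting (run w).

Definition digits (b t n : nat) : list nat :=
  map (fun i => (n / b ^ (t - 1 - i)) mod b) (seq 0 t).

Fixpoint zip3 (a b c : list nat) : list (nat * nat * nat) :=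
  match a, b, c with
  | x :: a', y :: b', z :: c' => (x, y, z) :: zip3 a' b' c'
  | _, _, _ => []
  end.

Definition input_word (t n x y : nat) : list (nat * nat * nat) :=
  zip3 (digits 4 t n) (digits 2 t x) (digits 2 t y).

From Stdlib Require Import Arith ZArith List Lia.
Import ListNotations.

(* The Hilbert word A_{k+1} consists of A_k followed by two copies of its
   transpose and one copy of its point reflection, joined by single steps;
   since A_k ends at (0, 2^k - 1) for k even and at (2^k - 1, 0) for k odd,
   the positions 4^k a + r are obtained from the positions r < 4^k by one of
   four affine maps [quadrant a (even k)], one for each quadrant of the
   square [0, 2^(k+1))^2.  Reading the digits most significant first, the
   automaton HS therefore only has to remember which symmetry of the square
   (identity, transposition, half-turn, anti-transposition) relates the
   coordinates still to be read to the position on the sub-curve still to be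
   traversed, and the parity of the number of digits left.  The transitions
   are verified against this meaning of the states one letter at a time; for
   the initial state the symmetry is the identity. *)

Definition vadd (p q : Z * Z) : Z * Z := (fst p + fst q, snd p + snd q)%Z.
Definition vswap (p : Z * Z) : Z * Z := (snd p, fst p).
Definition vopp (p : Z * Z) : Z * Z := (- fst p, - snd p)%Z.

Ltac pair_lia :=
  apply injective_projections; cbn [fst snd vadd vswap vopp d tD tH]; lia.

Fixpoint disp (w : list dir) : Z * Z :=
  match w with
  | [] => (0, 0)%Z
  | a :: w' => vadd (d a) (disp w')
  end.

Lemma disp_app w1 w2 : disp (w1 ++ w2) = vadd (disp w1) (disp w2).
Proof.
  induction w1 as [|a w1 IH]; cbn [disp app]; [|rewrite IH]; pair_lia.
Qed.

Lemma disp_map_tD w : disp (map tD w) = vswap (disp w).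
Proof.
  induction w as [|a w IH]; cbn [disp map]; [reflexivity|].
  rewrite IH; destruct a; pair_lia.
Qed.

Lemma disp_map_tH w : disp (map tH w) = vopp (disp w).
Proof.
  induction w as [|a w IH]; cbn [disp map]; [reflexivity|].
  rewrite IH; destruct a; pair_lia.
Qed.

Lemma disp_firstn_app_cons u c v r :
  disp (firstn (length u + S r) (u ++ c :: v))
  = vadd (disp u) (vadd (d c) (disp (firstn r v))).
Proof. now rewrite firstn_app_2, disp_app. Qed.

Lemma disp_firstn_block w c1 c2 c3 a r :
  a < 4 -> r <= length w ->
  disp (firstn (a * (length w + 1) + r)
                (w ++ c1 :: map tD w ++ c2 :: map tD w ++ c3 :: map tH w))
  = match a with
    | 0 => disp (firstn r w)
    | 1 => vadd (disp w) (vadd (d c1) (vswap (disp (firstn r w))))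
    | 2 => vadd (disp w) (vadd (d c1) (vadd (vswap (disp w))
             (vadd (d c2) (vswap (disp (firstn r w))))))
    | _ => vadd (disp w) (vadd (d c1) (vadd (vswap (disp w))
             (vadd (d c2) (vadd (vswap (disp w))
               (vadd (d c3) (vopp (disp (firstn r w))))))))
    end.
Proof.
  intros Ha Hr.
  assert (Hl : length (map tD w) = length w) by apply length_map.
  destruct a as [|[|[|[|a]]]]; try lia.
  - now rewrite firstn_app, (proj2 (Nat.sub_0_le _ _)), app_nil_r by lia.
  - replace (1 * (length w + 1) + r) with (length w + S r) by lia.
    rewrite disp_firstn_app_cons, firstn_app, firstn_map, Hl,
      (proj2 (Nat.sub_0_le _ _)), app_nil_r, disp_map_tD by lia.
    reflexivity.
  - replace (2 * (length w + 1) + r)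
      with (length w + S (length (map tD w) + S r)) by lia.
    rewrite !disp_firstn_app_cons, firstn_app, firstn_map, Hl,
      (proj2 (Nat.sub_0_le _ _)), app_nil_r, !disp_map_tD by lia.
    reflexivity.
  - replace (3 * (length w + 1) + r)
      with (length w + S (length (map tD w) + S (length (map tD w) + S r)))
      by lia.
    rewrite !disp_firstn_app_cons, firstn_map, disp_map_tH, !disp_map_tD.
    reflexivity.
Qed.

Lemma length_A k : length (A k) = 4 ^ k - 1.
Proof.
  induction k as [|k IH]; [reflexivity|].
  cbn [A]; rewrite Nat.pow_succ_r'.
  assert (4 ^ k <> 0) by (apply Nat.pow_nonzero; lia).
  destruct (Nat.even k); unfold step_odd, step_even;
    rewrite !length_app, !length_map; cbn [length]; lia.
Qed.

Lemma A_prefix k j : k <= j -> exists w, A j = A k ++ w.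
Proof.
  induction 1 as [|j _ [w Hw]]; [exists []; symmetry; apply app_nil_r|].
  cbn [A]; rewrite Hw.
  destruct (Nat.even j); unfold step_odd, step_even;
    eexists; rewrite <- app_assoc; reflexivity.
Qed.

Lemma h_nth_A n j : n < length (A j) -> h n = nth n (A j) U.
Proof.
  intros Hn; unfold h.
  assert (n < length (A (S n))).
  { rewrite length_A; pose proof (Nat.pow_gt_lin_r 4 (S n)); lia. }
  destruct (Nat.le_ge_cases j (S n)) as [Hj|Hj];
    destruct (A_prefix _ _ Hj) as [w ->]; rewrite app_nth1; auto.
Qed.

Lemma firstn_S_nth {T : Type} (l : list T) n x0 : n < length l ->
  firstn (S n) l = firstn n l ++ [nth n l x0].
Proof.
  revert n; induction l as [|a l IH]; intros [|n] Hn; cbn in *; try lia.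
  - reflexivity.
  - rewrite IH by lia; reflexivity.
Qed.

Lemma pos_disp_firstn n j : n <= length (A j) -> pos n = disp (firstn n (A j)).
Proof.
  induction n as [|n IH]; intros Hn; [reflexivity|].
  assert (Hpos : pos (S n) = vadd (pos n) (d (h n))).
  { cbn [pos]; destruct (pos n), (d (h n)); reflexivity. }
  rewrite Hpos, IH, (h_nth_A n j), (firstn_S_nth _ _ U) by lia.
  rewrite disp_app; cbn [disp]; pair_lia.
Qed.

Lemma Z_of_nat_pow2_S k : Z.of_nat (2 ^ S k) = (2 * Z.of_nat (2 ^ k))%Z.
Proof. now rewrite Nat.pow_succ_r', Nat2Z.inj_mul. Qed.

Lemma disp_A k :
  disp (A k) = if Nat.even k then (0, Z.of_nat (2 ^ k) - 1)%Z
               else (Z.of_nat (2 ^ k) - 1, 0)%Z.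
Proof.
  induction k as [|k IH]; [reflexivity|].
  cbn [A]; rewrite Nat.even_succ, <- Nat.negb_even, Z_of_nat_pow2_S.
  destruct (Nat.even k); unfold step_odd, step_even;
    rewrite !disp_app, !disp_map_tD, disp_map_tH, IH; cbn [disp negb]; pair_lia.
Qed.

Definition quadrant (a : nat) (ev : bool) (s : Z) (p : Z * Z) : Z * Z :=
  let '(u, v) := p in
  match a with
  | 0 => (u, v)
  | 1 => if ev then (v, s + u)%Z else (s + v, u)%Z
  | 2 => (s + v, s + u)%Z
  | _ => if ev then (2 * s - 1 - u, s - 1 - v)%Z else (s - 1 - u, 2 * s - 1 - v)%Z
  end.

Lemma pos_quadrant k a r : a < 4 -> r < 4 ^ k ->
  pos (a * 4 ^ k + r) = quadrant a (Nat.even k) (Z.of_nat (2 ^ k)) (pos r).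
Proof.
  intros Ha Hr.
  pose proof (length_A k) as Hk.
  pose proof (length_A (S k)) as HSk; rewrite Nat.pow_succ_r' in HSk.
  rewrite (pos_disp_firstn _ (S k)), (pos_disp_firstn r k) by nia.
  replace (4 ^ k) with (length (A k) + 1) by lia.
  pose proof (disp_A k) as HA.
  cbn [A]; destruct (Nat.even k); unfold step_odd, step_even; cbn [app];
    rewrite disp_firstn_block, HA by lia;
    destruct (disp (firstn r (A k))) as [u v];
    destruct a as [|[|[|[|a]]]]; try lia; cbn [quadrant]; pair_lia.
Qed.

Lemma lt_mul_split p q m : p <> 0 -> m < q * p ->
  exists a r, a < q /\ r < p /\ m = a * p + r.
Proof.
  intros Hp Hm; exists (m / p), (m mod p); repeat split.
  - apply Nat.Div0.div_lt_upper_bound; lia.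
  - now apply Nat.mod_upper_bound.
  - rewrite (Nat.div_mod_eq m p) at 1; lia.
Qed.

Lemma pos_bound k r : r < 4 ^ k ->
  (0 <= fst (pos r) < Z.of_nat (2 ^ k) /\ 0 <= snd (pos r) < Z.of_nat (2 ^ k))%Z.
Proof.
  revert r; induction k as [|k IH]; intros r Hr.
  - replace r with 0 by (cbn in Hr; lia); cbn; lia.
  - rewrite Nat.pow_succ_r' in Hr.
    destruct (lt_mul_split (4 ^ k) 4 r) as (a & r' & Ha & Hr' & ->);
      [apply Nat.pow_nonzero; lia | lia |].
    rewrite pos_quadrant, Z_of_nat_pow2_S by assumption.
    specialize (IH r' Hr'); destruct (pos r') as [u v]; cbn [fst snd] in IH.
    destruct a as [|[|[|[|a]]]]; try lia;
      destruct (Nat.even k); cbn [quadrant fst snd]; lia.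
Qed.

Definition state_rel (q : nat) (ev : bool) (s : Z) (p p' : Z * Z) : Prop :=
  let '(x, y) := p in
  let '(u, v) := p' in
  match q with
  | 0 => (x = u /\ y = v)%Z
  | 5 => (x = v /\ y = u)%Z
  | 1 => if ev then False else (x = v /\ y = u)%Z
  | 3 => if ev then (x = v /\ y = u)%Z else False
  | 6 => if ev then (x = u /\ y = v)%Z else False
  | 9 => if ev then False else (x = u /\ y = v)%Z
  | 2 => if ev then (x = s - 1 - u /\ y = s - 1 - v)%Z else False
  | 7 => if ev then (x = s - 1 - v /\ y = s - 1 - u)%Z else False
  | 4 => if ev then False else (x = s - 1 - u /\ y = s - 1 - v)%Z
  | 8 => if ev then False else (x = s - 1 - v /\ y = s - 1 - u)%Z
  | _ => False
  end.

Lemma accepting_state_rel q :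
  accepting q = true <-> state_rel q true 1 (0, 0)%Z (0, 0)%Z.
Proof.
  do 10 (destruct q as [|q]; [cbn; intuition (discriminate || lia)|]).
  destruct q; cbn; intuition discriminate.
Qed.

Lemma state_rel_delta q a b c ev s x y u v :
  a < 4 -> b < 2 -> c < 2 ->
  (0 <= x < s)%Z -> (0 <= y < s)%Z -> (0 <= u < s)%Z -> (0 <= v < s)%Z ->
  state_rel q (negb ev) (2 * s)
    (Z.of_nat b * s + x, Z.of_nat c * s + y)%Z (quadrant a ev s (u, v))
  <-> state_rel (delta q (a, b, c)) ev s (x, y) (u, v).
Proof.
  intros Ha Hb Hc Hx Hy Hu Hv.
  destruct a as [|[|[|[|a]]]]; try lia;
  destruct b as [|[|b]]; try lia;
  destruct c as [|[|c]]; try lia;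
  destruct ev;
  do 10 (destruct q as [|q]; [cbv [state_rel delta quadrant negb dead]; lia|]);
  cbv [state_rel delta quadrant negb dead]; lia.
Qed.

Lemma digits_S_add b k a r : a < b -> r < b ^ k ->
  digits b (S k) (a * b ^ k + r) = a :: digits b k r.
Proof.
  intros Ha Hr.
  assert (Hb : b <> 0) by lia.
  unfold digits; cbn [seq map]; rewrite <- seq_shift, map_map; f_equal.
  - replace (S k - 1 - 0) with k by lia.
    rewrite Nat.div_add_l, Nat.div_small, Nat.add_0_r, Nat.mod_small by lia.
    reflexivity.
  - apply map_ext_in; intros i Hi; apply in_seq in Hi.
    replace (S k - 1 - S i) with (k - 1 - i) by lia.
    replace (a * b ^ k) with (a * b ^ (k - 1 - (k - 1 - i)) * b * b ^ (k - 1 - i))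
      by (rewrite <- !Nat.mul_assoc, <- Nat.pow_succ_r', <- Nat.pow_add_r;
          f_equal; f_equal; lia).
    rewrite Nat.div_add_l by (apply Nat.pow_nonzero; lia).
    now rewrite Nat.add_comm, Nat.Div0.mod_add.
Qed.

Lemma input_word_S k a b c m x y :
  a < 4 -> b < 2 -> c < 2 -> m < 4 ^ k -> x < 2 ^ k -> y < 2 ^ k ->
  input_word (S k) (a * 4 ^ k + m) (b * 2 ^ k + x) (c * 2 ^ k + y)
  = (a, b, c) :: input_word k m x y.
Proof. intros; unfold input_word; rewrite !digits_S_add by assumption; reflexivity. Qed.

Lemma accepting_run_from k : forall q m x y,
  m < 4 ^ k -> x < 2 ^ k -> y < 2 ^ k ->
  accepting (fold_left delta (input_word k m x y) q) = true
  <-> state_rel q (Nat.even k) (Z.of_nat (2 ^ k))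
        (Z.of_nat x, Z.of_nat y) (pos m).
Proof.
  induction k as [|k IH]; intros q m x y Hm Hx Hy.
  - cbn in Hm, Hx, Hy.
    replace m with 0 by lia; replace x with 0 by lia; replace y with 0 by lia.
    apply accepting_state_rel.
  - rewrite Nat.pow_succ_r' in Hm, Hx, Hy.
    assert (H4 : 4 ^ k <> 0) by (apply Nat.pow_nonzero; lia).
    assert (H2 : 2 ^ k <> 0) by (apply Nat.pow_nonzero; lia).
    destruct (lt_mul_split _ _ _ H4 Hm) as (a & m' & Ha & Hm' & ->).
    destruct (lt_mul_split _ _ _ H2 Hx) as (b & x' & Hb & Hx' & ->).
    destruct (lt_mul_split _ _ _ H2 Hy) as (c & y' & Hc & Hy' & ->).
    rewrite input_word_S by assumption; cbn [fold_left].
    rewrite IH, pos_quadrant, Nat.even_succ, <- Nat.negb_even, Z_of_nat_pow2_S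
      by assumption.
    rewrite !Nat2Z.inj_add, !Nat2Z.inj_mul.
    pose proof (pos_bound k m' Hm') as Hbound.
    destruct (pos m') as [u v]; cbn [fst snd] in Hbound.
    symmetry; apply state_rel_delta; lia.
Qed.

Theorem mainTheorem3 (n x y t : nat) :
  n < 4 ^ t -> x < 2 ^ t -> y < 2 ^ t ->
  (HS_accepts (input_word t n x y) = true <->
   pos n = (Z.of_nat x, Z.of_nat y)).
Proof.
  intros Hn Hx Hy.
  unfold HS_accepts, run; rewrite accepting_run_from by assumption.
  destruct (pos n) as [u v]; cbn [state_rel].
  rewrite pair_equal_spec; intuition congruence.
Qed.
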